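(* Let $N\ge1$, $K\ge2$ be integers with $N$ divisible by $K$ ($K$ may be odd or even), put $m=N/K$, and let $\alpha\in[0,2]$. Then $\mathcal{B}_\alpha(N,K)$ has a symmetric equilibrium strategy that induces uniform marginals, and in the resulting equilibrium each player's expected payoff equals $K\cdot\frac{m+\alpha/2}{2m+1}$.
   Context: Fix integers $N\ge1$, $K\ge2$ and a real number $\alpha$. The Colonel Blotto game $\mathcal{B}_\alpha(N,K)$ is the two-player simultaneous-move game with players $A,B$, each with pure strategy set $S=\{s\in\{0,1,\ldots,N\}^K:\sum_{k=1}^K s_k=N\}$, in which the payoff of player $i$ at the pure profile $(s^i,s^{-i})$ is $\pi^i(s^i,s^{-i})=\sum_{k=1}^K\big(\mathbf 1[s^i_k>s^{-i}_k]+\tfrac{\alpha}{2}\mathbf 1[s^i_k=s^{-i}_k]\big)$. Mixed strategies are probability distributions on $S$, with expected payoffs under independent randomization. A symmetric equilibrium strategy is a mixed strategy $\sigma$ such that $(\sigma,\sigma)$ is a Nash equilibrium. For a mixed strategy $\sigma$ and battlefield $k$, the marginal $\sigma_k$ is the distribution of $s_k$ when $s\sim\sigma$; with $m=N/K$, $\sigma$ induces uniform marginals if every $\sigma_k$ is the uniform distribution on $\{0,1,\ldots,2m\}$. *)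

From HB Require Import structures.
From mathcomp Require Import all_boot all_order all_algebra.
From mathcomp Require Import reals.
Set Implicit Arguments. Unset Strict Implicit. Unset Printing Implicit Defensive.
Import Order.TTheory GRing.Theory Num.Theory.
Local Open Scope ring_scope.

Definition pure (N K : nat) : predArgType :=
  {s : {ffun 'I_K -> 'I_N.+1} | (\sum_(k < K) (s k : nat))%N == N}.

Definition blotto_payoff (R : realType) (alpha : R) (N K : nat)
  (s t : pure N K) : R :=
  \sum_(k < K) ((((val s) k > (val t) k)%N)%:R
                + alpha / 2%:R * (((val s) k == (val t) k) : nat)%:R).

Definition mixed (R : realType) (N K : nat) (sigma : pure N K -> R) : Prop :=
  (forall s, 0 <= sigma s) /\ \sum_(s : pure N K) sigma s = 1.

Definition payoffA (R : realType) (alpha : R) (N K : nat)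
  (sA sB : pure N K -> R) : R :=
  \sum_(s : pure N K) \sum_(t : pure N K) sA s * sB t * blotto_payoff alpha s t.
Definition payoffB (R : realType) (alpha : R) (N K : nat)
  (sA sB : pure N K -> R) : R :=
  \sum_(s : pure N K) \sum_(t : pure N K) sA s * sB t * blotto_payoff alpha t s.

Definition nash (R : realType) (alpha : R) (N K : nat)
  (sA sB : pure N K -> R) : Prop :=
  mixed sA /\ mixed sB /\
  (forall tau, mixed tau -> payoffA alpha tau sB <= payoffA alpha sA sB) /\
  (forall tau, mixed tau -> payoffB alpha sA tau <= payoffB alpha sA sB).

Definition symmetric_equilibrium (R : realType) (alpha : R) (N K : nat)
  (sigma : pure N K -> R) : Prop := nash alpha sigma sigma.

Definition marginal (R : realType) (N K : nat) (sigma : pure N K -> R)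
  (k : 'I_K) (j : 'I_N.+1) : R :=
  \sum_(s : pure N K | (val s) k == j) sigma s.

Definition uniform_marginals (R : realType) (N K : nat)
  (sigma : pure N K -> R) : Prop :=
  forall (k : 'I_K) (j : 'I_N.+1),
    marginal sigma k j =
      if (j <= 2 * (N %/ K))%N then ((2 * (N %/ K)).+1%:R)^-1 else 0.

From HB Require Import structures.
From mathcomp Require Import all_boot all_order all_algebra.
From mathcomp Require Import reals.
From mathcomp Require Import zify ring.
Set Implicit Arguments. Unset Strict Implicit. Unset Printing Implicit Defensive.
Import Order.TTheory GRing.Theory Num.Theory.

(* Let m = N/K and n = 2m+1. Against any strategy whose marginals are uniform
   on {0..2m}, a pure allocation s earns (min(s_k, n) + alpha/2 [s_k < n]) / n
   on battlefield k, which is at most (s_k + alpha/2) / n, with equality when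
   s_k <= 2m. Summing over the battlefields bounds every payoff by
   (N + K alpha/2) / n, and the bound is attained by all allocations bounded by
   2m, i.e. by every allocation in the support of a strategy with uniform
   marginals: such a strategy is a symmetric equilibrium. One exists because
   {0..2m} carries K permutations p_1..p_K whose values sum to N at every point,
   and then the uniform mixture of the n allocations (p_k(i))_k has uniform
   marginals. *)

Section ColumnPermutations.
Variables m K : nat.

(* Battlefields are paired so that
   their values are [i] and [2m - i], except that for odd [K] the first three
   take [i], [i + m] and [-2i-1] modulo [2m+1], which sum to [3m]. *)
Definition blotto_perm (k i : nat) : nat :=
  if odd K && (k < 3) then
    if k == 0 then i
    else if k == 1 then (if i <= m then i + m else i - m.+1)
    else (if i <= m then 2 * m - 2 * i else 4 * m + 1 - 2 * i)
  else if odd k then 2 * m - i else i.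

Lemma blotto_perm_lt k i : i < (2 * m).+1 -> blotto_perm k i < (2 * m).+1.
Proof.
rewrite /blotto_perm => hi.
case: (odd K && _); [case: (k == 0); [|case: (k == 1)]|case: (odd k)];
  try lia; case: (leqP i m) => ?; lia.
Qed.

Lemma blotto_perm_inj k i j : i < (2 * m).+1 -> j < (2 * m).+1 ->
  blotto_perm k i = blotto_perm k j -> i = j.
Proof.
rewrite /blotto_perm => hi hj.
case: (odd K && _); [case: (k == 0); [|case: (k == 1)]|case: (odd k)];
  try lia; case: (leqP i m) => ?; case: (leqP j m) => ?; lia.
Qed.

Definition blotto_perm_ord k (i : 'I_(2 * m).+1) : 'I_(2 * m).+1 :=
  Ordinal (blotto_perm_lt k (ltn_ord i)).

Lemma blotto_perm_ord_inj k : injective (blotto_perm_ord k).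
Proof. by move=> i j /(congr1 val) /blotto_perm_inj eq_ij; apply/val_inj/eq_ij. Qed.

End ColumnPermutations.

Lemma sum_nat_alternating (x y a j : nat) :
  \sum_(a <= k < a + 2 * j) (if odd k then x else y) = j * (x + y).
Proof.
elim: j => [|j IH]; first by rewrite muln0 addn0 big_geq.
rewrite mulnS !addnS big_nat_recr /=; last lia.
rewrite big_nat_recr /=; last lia.
by rewrite IH; case: (odd _) => /=; lia.
Qed.

Lemma sum_blotto_perm m K i : 2 <= K -> i < (2 * m).+1 ->
  \sum_(k < K) blotto_perm m K k i = K * m.
Proof.
move=> K_ge2 lt_i; rewrite -(big_mkord xpredT (fun k => blotto_perm m K k i)).
have halfK := odd_double_half K; rewrite -muln2 in halfK.
case oK: (odd K); rewrite oK /= in halfK.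
- have K_odd : K = 3 + 2 * (K./2 - 1) by lia.
  rewrite {1}K_odd.
  rewrite (big_cat_nat _ (n := 3)) //= big_ltn // big_ltn // big_ltn // big_geq //.
  rewrite /blotto_perm oK /=.
  rewrite (eq_big_nat _ _ (F2 := fun k => if odd k then 2 * m - i else i)); last first.
    by move=> k /andP[hk _]; rewrite (_ : k < 3 = false) //; lia.
  rewrite sum_nat_alternating subnK; last by lia.
  case: (leqP i m) => ?; nia.
- have K_even : K = 0 + 2 * K./2 by lia.
  rewrite {1}K_even.
  rewrite (eq_big_nat _ _ (F2 := fun k => if odd k then 2 * m - i else i)); last first.
    by move=> k _; rewrite /blotto_perm oK.
  by rewrite sum_nat_alternating subnK; nia.
Qed.

Lemma double_divn_leq N K : 2 <= K -> 2 * (N %/ K) <= N.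
Proof. by move=> K_ge2; rewrite (leq_trans (leq_mul K_ge2 (leqnn _))) // mulnC leq_divM. Qed.

Lemma sum_ord_ltn x n : \sum_(j < n) (j < x) = minn x n.
Proof.
elim: n => [|n IH]; first by rewrite big_ord0 minn0.
by rewrite big_ord_recr /= IH; case: ltnP => ?; lia.
Qed.

Lemma sum_ord_eq x n : \sum_(j < n) (x == j :> nat) = (x < n).
Proof.
elim: n => [|n IH]; first by rewrite big_ord0.
by rewrite big_ord_recr /= IH; case: eqP => ?; lia.
Qed.

Lemma sum_ord_inj_eq n (f : 'I_n -> 'I_n) x : injective f ->
  \sum_(i < n) (f i == x :> nat) = (x < n).
Proof.
move=> f_inj; rewrite -sum_ord_eq [RHS](reindex_inj f_inj) /=.
by apply: eq_bigr => i _; rewrite eq_sym.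
Qed.

Local Open Scope ring_scope.

Section UniformMixture.
Variables (R : realType) (N K n : nat) (g : 'I_n.+1 -> pure N K).

Definition unif_mix (s : pure N K) : R := (n.+1%:R)^-1 * \sum_(i < n.+1) (g i == s)%:R.

Lemma sum_unif_mix (phi : pure N K -> R) :
  \sum_s unif_mix s * phi s = (n.+1%:R)^-1 * \sum_(i < n.+1) phi (g i).
Proof.
under eq_bigr do rewrite -mulrA mulr_suml.
rewrite -mulr_sumr exchange_big /=; congr (_ * _); apply: eq_bigr => i _.
rewrite (bigD1 (g i)) //= eqxx mul1r big1 ?addr0 // => s /negbTE.
by rewrite eq_sym => ->; rewrite mul0r.
Qed.

Lemma unif_mix_mixed : mixed unif_mix.
Proof.
split=> [s|].
  by rewrite mulr_ge0 ?invr_ge0 ?ler0n // sumr_ge0 // => i _; apply: ler0n.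
under eq_bigr do rewrite -[unif_mix _]mulr1.
by rewrite sum_unif_mix sumr_const card_ord mulVf // pnatr_eq0.
Qed.

End UniformMixture.

Section ExpectedPayoff.
Variables (R : realType) (alpha : R) (N K : nat).
Implicit Types (sigma tau : pure N K -> R) (s t : pure N K).

Definition payoff_against sigma s : R := \sum_t sigma t * blotto_payoff alpha s t.

Lemma payoffA_against tau sigma :
  payoffA alpha tau sigma = \sum_s tau s * payoff_against sigma s.
Proof.
apply: eq_bigr => s _; rewrite mulr_sumr.
by apply: eq_bigr => t _; rewrite mulrA.
Qed.

Lemma payoffB_payoffA sigma tau : payoffB alpha sigma tau = payoffA alpha tau sigma.
Proof.
rewrite /payoffB /payoffA exchange_big; apply: eq_bigr => t _.
by apply: eq_bigr => s _; rewrite (mulrC (sigma s)).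
Qed.

Lemma payoffA_le tau sigma (V : R) : mixed tau ->
  (forall s, payoff_against sigma s <= V) -> payoffA alpha tau sigma <= V.
Proof.
move=> [tau_ge0 tau_sum1] le_V; rewrite payoffA_against.
apply: (@le_trans _ _ (\sum_s tau s * V)).
  by apply: ler_sum => s _; rewrite ler_wpM2l.
by rewrite -mulr_suml tau_sum1 mul1r.
Qed.

Lemma payoffA_eq tau sigma (V : R) : mixed tau ->
  (forall s, tau s != 0 -> payoff_against sigma s = V) -> payoffA alpha tau sigma = V.
Proof.
move=> [_ tau_sum1] eq_V; rewrite payoffA_against.
rewrite (eq_bigr (fun s => tau s * V)); first by rewrite -mulr_suml tau_sum1 mul1r.
move=> s _.
by have [->|/eq_V ->] := eqVneq (tau s) 0; rewrite ?mul0r.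
Qed.

Lemma sum_marginal sigma k (F : 'I_N.+1 -> R) :
  \sum_t sigma t * F (val t k) = \sum_j marginal sigma k j * F j.
Proof.
under [RHS]eq_bigr do rewrite /marginal big_mkcond mulr_suml.
rewrite exchange_big /=; apply: eq_bigr => t _.
rewrite (bigD1 (val t k)) //= eqxx big1 ?addr0 // => j /negbTE.
by rewrite eq_sym => ->; rewrite mul0r.
Qed.

Lemma payoff_against_marginals sigma s : payoff_against sigma s =
  \sum_(k < K) \sum_(j < N.+1) marginal sigma k j *
    (((j < val s k)%N)%:R + alpha / 2%:R * ((val s k == j) : nat)%:R).
Proof.
rewrite /payoff_against /blotto_payoff.
under eq_bigr do rewrite mulr_sumr.
by rewrite exchange_big; apply: eq_bigr => k _; rewrite -sum_marginal.
Qed.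

Lemma le_marginal sigma s k : mixed sigma -> sigma s <= marginal sigma k (val s k).
Proof.
move=> [sigma_ge0 _]; rewrite /marginal (bigD1 s) //= lerDl.
by apply: sumr_ge0 => t _.
Qed.

End ExpectedPayoff.

Definition blotto_value (R : realType) (alpha : R) (N K : nat) : R :=
  K%:R * (((N %/ K)%:R + alpha / 2) / (2 * (N %/ K)).+1%:R).

Section UniformMarginals.
Variables (R : realType) (alpha : R) (N K : nat).
Hypotheses (K_ge2 : (2 <= K)%N) (K_dvd_N : (K %| N)%N) (alpha_ge0 : 0 <= alpha).
Variable sigma : pure N K -> R.
Hypotheses (sigma_mixed : mixed sigma) (sigma_unif : uniform_marginals sigma).

Let m := (N %/ K)%N.
Let n := (2 * m).+1.
Implicit Type s : pure N K.

Lemma payoff_against_uniform s : payoff_against alpha sigma s =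
  (n%:R)^-1 * \sum_(k < K) ((minn (val s k) n)%:R + alpha / 2%:R * ((val s k < n)%N)%:R).
Proof.
rewrite payoff_against_marginals mulr_sumr; apply: eq_bigr => k _.
under eq_bigr do rewrite sigma_unif -/m (fun_if (fun c => c * _)) mul0r.
rewrite -big_mkcond /= (big_ord_narrow_leq (double_divn_leq N K_ge2)) -mulr_sumr.
by rewrite big_split /= -mulr_sumr -!natr_sum sum_ord_ltn sum_ord_eq.
Qed.

Lemma sum_battlefields s :
  \sum_(k < K) ((val s k : nat)%:R + alpha / 2%:R) = n%:R * blotto_value alpha N K.
Proof.
have N_eq : N = (m * K)%N by rewrite divnK.
rewrite big_split /= -natr_sum (eqP (valP s)) sumr_const card_ord /blotto_value -/m -/n.
rewrite -mulr_natl {1}N_eq natrM; field.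
by rewrite pnatr_eq0.
Qed.

Lemma payoff_against_uniform_le s : payoff_against alpha sigma s <= blotto_value alpha N K.
Proof.
have n_gt0 : 0 < n%:R :> R by rewrite ltr0n.
rewrite payoff_against_uniform ler_pdivrMl // -(sum_battlefields s).
apply: ler_sum => k _; case: (ltnP (val s k) n) => [s_lt|s_ge].
  by rewrite mulr1.
by rewrite mulr0 addr0 ler_wpDr ?ler_nat // divr_ge0 ?ler0n.
Qed.

Lemma uniform_support s k : sigma s != 0 -> (val s k < n)%N.
Proof.
move=> sigma_s; apply: contraNT sigma_s; rewrite -leqNgt => s_ge.
rewrite eq_le (sigma_mixed.1 s) andbT.
by have := le_marginal s k sigma_mixed; rewrite sigma_unif -/m leqNgt s_ge.
Qed.

Lemma payoff_against_uniform_support s :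
  sigma s != 0 -> payoff_against alpha sigma s = blotto_value alpha N K.
Proof.
move=> sigma_s; have n_neq0 : n%:R != 0 :> R by rewrite pnatr_eq0.
rewrite payoff_against_uniform -[blotto_value _ _ _](mulKf n_neq0) -(sum_battlefields s).
congr (_ * _); apply: eq_bigr => k _; have s_lt := uniform_support k sigma_s.
by rewrite (minn_idPl (ltnW s_lt)) s_lt mulr1.
Qed.

Lemma uniform_marginals_equilibrium :
  symmetric_equilibrium alpha sigma /\
  payoffA alpha sigma sigma = blotto_value alpha N K /\
  payoffB alpha sigma sigma = blotto_value alpha N K.
Proof.
have value : payoffA alpha sigma sigma = blotto_value alpha N K.
  exact: payoffA_eq sigma_mixed payoff_against_uniform_support.
have best_reply tau : mixed tau -> payoffA alpha tau sigma <= payoffA alpha sigma sigma.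
  by move=> tau_mixed; rewrite value; apply: payoffA_le tau_mixed payoff_against_uniform_le.
split; last by split; rewrite ?payoffB_payoffA.
do 2!split=> //.
by split=> tau; rewrite ?payoffB_payoffA; apply: best_reply.
Qed.

End UniformMarginals.

Section Construction.
Variables (R : realType) (N K : nat).
Hypotheses (K_ge2 : (2 <= K)%N) (K_dvd_N : (K %| N)%N).

Let m := (N %/ K)%N.

Definition blotto_allocation (i : 'I_(2 * m).+1) : {ffun 'I_K -> 'I_N.+1} :=
  [ffun k : 'I_K => inord (blotto_perm m K k i)].

Lemma blotto_allocationE i (k : 'I_K) : (blotto_allocation i k : nat) = blotto_perm m K k i.
Proof.
rewrite ffunE inordK // (leq_trans (blotto_perm_lt _ _ (ltn_ord i))) // ltnS.
exact: double_divn_leq.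
Qed.

Lemma sum_blotto_allocation i : (\sum_(k < K) (blotto_allocation i k : nat))%N == N.
Proof.
under eq_bigr do rewrite blotto_allocationE.
by rewrite sum_blotto_perm // mulnC divnK.
Qed.

Definition blotto_column (i : 'I_(2 * m).+1) : pure N K :=
  exist _ (blotto_allocation i) (sum_blotto_allocation i).

Definition blotto_mix : pure N K -> R := unif_mix R blotto_column.

Lemma blotto_mix_mixed : mixed blotto_mix.
Proof. exact: unif_mix_mixed. Qed.

Lemma blotto_mix_uniform_marginals : uniform_marginals blotto_mix.
Proof.
move=> k j; transitivity (\sum_s blotto_mix s * ((val s k == j) : nat)%:R).
  by rewrite /marginal big_mkcond; apply: eq_bigr => s _; case: ifP; rewrite ?mulr1 ?mulr0.
rewrite sum_unif_mix -/m -natr_sum.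
under eq_bigr do rewrite -val_eqE /= blotto_allocationE.
rewrite (sum_ord_inj_eq _ (@blotto_perm_ord_inj m K k)) ltnS.
by case: leqP; rewrite ?mulr1 ?mulr0.
Qed.

End Construction.

Theorem proposition5 (R : realType) (N K : nat) (alpha : R) :
  (1 <= N)%N -> (2 <= K)%N -> (K %| N)%N -> 0 <= alpha <= 2 ->
  exists sigma : pure N K -> R,
    symmetric_equilibrium alpha sigma /\ uniform_marginals sigma /\
    payoffA alpha sigma sigma =
      K%:R * (((N %/ K)%:R + alpha / 2) / (2 * (N %/ K)).+1%:R) /\
    payoffB alpha sigma sigma =
      K%:R * (((N %/ K)%:R + alpha / 2) / (2 * (N %/ K)).+1%:R).
Proof.
move=> _ K_ge2 K_dvd_N /andP[alpha_ge0 _].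
have sigma_unif := blotto_mix_uniform_marginals R K_ge2 K_dvd_N.
have [equilibrium [valueA valueB]] := uniform_marginals_equilibrium
  K_ge2 K_dvd_N alpha_ge0 (blotto_mix_mixed R K_ge2 K_dvd_N) sigma_unif.
by exists (blotto_mix R K_ge2 K_dvd_N).
Qed.
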